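(* Let $\alpha,\beta,\delta>0$, $\pi_g\in(0,1)$ and $\Delta_g=1/\pi_g-1$. Let $g:\mathbb{R}_+\to\mathbb{R}_+$ be differentiable and strictly increasing with $g(0)=1$ and $g'>0$. For a job $j$ with task intensities $a_j,p_j,r_j\ge 0$ and contact intensity $k_j\ge 0$, define \[ B_j(k_j)=1+(\alpha a_j+\beta p_j)\,g(k_j),\qquad P_j=1+\delta r_j,\qquad U_j=1/P_j,\qquad E_j^\ast=\frac{B_j}{B_j+P_j}. \] For $h\in\{M,g\}$ define \[ V_{hj}=(E_j^\ast)^2\tau^2_{hj}+(1-E_j^\ast)^2U_j, \] where $\tau^2_{Mj}=B_j$ and $\tau^2_{gj}=B_j/\pi_g$. Then: (i) If $a_j=p_j=0$ (a purely routine job), then $V_{Mj}$, $V_{gj}$ and the variance gap $V_{gj}-V_{Mj}$ do not depend on $k_j$. Hence the callback probabilities \[ c_{hj}=1-\Phi\!\left(\bar\theta\sqrt{1+V_{hj}}\right),\qquad \bar\theta>0, \] and the callback gap $c_{Mj}-c_{gj}$ also do not depend on $k_j$. (ii) If $a_j+p_j>0$, then $E_j^\ast$ and the variance gap \[ V_{gj}-V_{Mj}=\Delta_g\,\frac{B_j^3}{(B_j+P_j)^2} \] are strictly increasing in $k_j$. (iii) The cross-partials satisfy \[ \frac{\partial^2 B_j}{\partial k_j\,\partial a_j}=\alpha g'(k_j)>0,\qquad \frac{\partial^2 B_j}{\partial k_j\,\partial p_j}=\beta g'(k_j)>0. \]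
   Context: The setting is an information-based model of hiring. Productivity is $\theta\sim N(0,1)$ for both groups. For a group-$h$ applicant to job $j$ there are two signals: a subjective signal $s^s=\theta+\varepsilon^s$ with $\varepsilon^s\sim N(0,\tau^2_{hj})$, and an objective signal $s^o=\theta+\varepsilon^o$ with $\varepsilon^o\sim N(0,U_j)$. These are independent given $\theta$. The employer forms the composite $E_j^\ast s^s+(1-E_j^\ast)s^o$, and $V_{hj}$ is its noise variance. The callback probability is that of calling back when the posterior mean of $\theta$ given the composite exceeds $\bar\theta$. $\Phi$ is the standard normal cumulative distribution function. Group $M$ is the majority group and group $g$ is a minority group. *)

From Stdlib Require Import Reals.
From Coquelicot Require Import Coquelicot.
Open Scope R_scope.

Definition std_normal_pdf (t : R) : R := exp (- t ^ 2 / 2) / sqrt (2 * PI).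
Definition Phi (x : R) : R :=
  RInt_gen std_normal_pdf (Rbar_locally m_infty) (at_point x).

Definition Bj (alpha beta : R) (g : R -> R) (a p k : R) : R :=
  1 + (alpha * a + beta * p) * g k.
Definition Pj (delta r : R) : R := 1 + delta * r.
Definition Uj (delta r : R) : R := / Pj delta r.
Definition Estar (alpha beta delta : R) (g : R -> R) (a p r k : R) : R :=
  Bj alpha beta g a p k / (Bj alpha beta g a p k + Pj delta r).

Definition Vvar (tau2 E U : R) : R := E ^ 2 * tau2 + (1 - E) ^ 2 * U.
Definition VM (alpha beta delta : R) (g : R -> R) (a p r k : R) : R :=
  Vvar (Bj alpha beta g a p k) (Estar alpha beta delta g a p r k) (Uj delta r).
Definition Vg (pig alpha beta delta : R) (g : R -> R) (a p r k : R) : R :=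
  Vvar (Bj alpha beta g a p k / pig) (Estar alpha beta delta g a p r k) (Uj delta r).

Definition callback (thetabar V : R) : R := 1 - Phi (thetabar * sqrt (1 + V)).

(* For a purely routine job B_j = 1 identically, so nothing depends on k_j.
   Otherwise B_j inherits strict monotonicity in k_j from g, and both
   E_j^* = B_j / (B_j + P_j) and the variance gap
   V_gj - V_Mj = E_j^*^2 (B_j / pi_g - B_j) = Delta_g B_j E_j^*^2
   are increasing functions of B_j.  B_j is affine in (a_j, p_j) with
   coefficients alpha g(k_j) and beta g(k_j), which gives the cross-partials
   in either order of differentiation. *)
From Stdlib Require Import Reals Lra.
From Coquelicot Require Import Coquelicot.
Open Scope R_scope.

Lemma inv_sub1_gt0 (x : R) : 0 < x < 1 -> 0 < / x - 1.
Proof.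
  intros Hx.
  assert (1 < / x) by (rewrite <- Rinv_1; apply Rinv_lt_contravar; lra).
  lra.
Qed.

Lemma share_lt (P x y : R) : 0 < P -> 0 < x -> x < y -> x / (x + P) < y / (y + P).
Proof.
  intros HP Hx Hxy.
  apply Rlt_0_minus.
  replace (y / (y + P) - x / (x + P)) with (P * (y - x) / ((x + P) * (y + P)))
    by (field; lra).
  apply Rdiv_lt_0_compat; nra.
Qed.

Lemma cube_share_lt (D P x y : R) : 0 < D -> 0 < P -> 0 < x -> x < y ->
  D * x ^ 3 / (x + P) ^ 2 < D * y ^ 3 / (y + P) ^ 2.
Proof.
  intros HD HP Hx Hxy.
  replace (D * x ^ 3 / (x + P) ^ 2) with (D * (x * (x / (x + P)) ^ 2)) by (field; lra).
  replace (D * y ^ 3 / (y + P) ^ 2) with (D * (y * (y / (y + P)) ^ 2)) by (field; lra).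
  apply Rmult_lt_compat_l; [exact HD |].
  pose proof (share_lt P x y HP Hx Hxy) as Hshare.
  assert (0 < x / (x + P)) by (apply Rdiv_lt_0_compat; lra).
  assert ((x / (x + P)) ^ 2 < (y / (y + P)) ^ 2) by nra.
  nra.
Qed.

Lemma Vvar_sub_tau2 (t1 t2 E U : R) : Vvar t1 E U - Vvar t2 E U = E ^ 2 * (t1 - t2).
Proof. unfold Vvar; ring. Qed.

Lemma Pj_ge1 (delta r : R) : 0 <= delta -> 0 <= r -> 1 <= Pj delta r.
Proof. unfold Pj; nra. Qed.

Section Intensity.

Variables (alpha beta delta : R) (g : R -> R).

Lemma Bj_routine (k : R) : Bj alpha beta g 0 0 k = 1.
Proof. unfold Bj; ring. Qed.

Lemma VM_routine_const (r k1 k2 : R) :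
  VM alpha beta delta g 0 0 r k1 = VM alpha beta delta g 0 0 r k2.
Proof. unfold VM, Estar; rewrite !Bj_routine; reflexivity. Qed.

Lemma Vg_routine_const (pig r k1 k2 : R) :
  Vg pig alpha beta delta g 0 0 r k1 = Vg pig alpha beta delta g 0 0 r k2.
Proof. unfold Vg, Estar; rewrite !Bj_routine; reflexivity. Qed.

Lemma Bj_ge1 (a p k : R) :
  0 <= alpha * a + beta * p -> 0 <= g k -> 1 <= Bj alpha beta g a p k.
Proof. unfold Bj; nra. Qed.

Lemma Bj_lt (a p k1 k2 : R) :
  0 < alpha * a + beta * p -> g k1 < g k2 ->
  Bj alpha beta g a p k1 < Bj alpha beta g a p k2.
Proof. unfold Bj; nra. Qed.

Lemma Vg_sub_VM (pig a p r k : R) :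
  Bj alpha beta g a p k + Pj delta r <> 0 ->
  Vg pig alpha beta delta g a p r k - VM alpha beta delta g a p r k
  = (/ pig - 1) * Bj alpha beta g a p k ^ 3 / (Bj alpha beta g a p k + Pj delta r) ^ 2.
Proof.
  intros HBP.
  unfold Vg, VM; rewrite Vvar_sub_tau2; unfold Estar.
  replace (Bj alpha beta g a p k / pig - Bj alpha beta g a p k)
    with ((/ pig - 1) * Bj alpha beta g a p k) by (unfold Rdiv; ring).
  generalize (/ pig - 1); intros D.
  field; exact HBP.
Qed.

Lemma Derive_Bj_a (a p k : R) :
  Derive (fun a' => Bj alpha beta g a' p k) a = alpha * g k.
Proof. apply is_derive_unique; unfold Bj; auto_derive; [auto | ring]. Qed.

Lemma Derive_Bj_p (a p k : R) :
  Derive (fun p' => Bj alpha beta g a p' k) p = beta * g k.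
Proof. apply is_derive_unique; unfold Bj; auto_derive; [auto | ring]. Qed.

Lemma Derive_Bj_k (a p k : R) : ex_derive g k ->
  Derive (fun k' => Bj alpha beta g a p k') k = (alpha * a + beta * p) * Derive g k.
Proof.
  intros Hg; apply is_derive_unique; unfold Bj.
  auto_derive; [auto | now rewrite Rmult_1_l].
Qed.

Lemma is_derive_Bj_ka (a p k : R) : ex_derive g k ->
  is_derive (fun k' => Derive (fun a' => Bj alpha beta g a' p k') a) k (alpha * Derive g k).
Proof.
  intros Hg.
  apply (is_derive_ext (fun k' => alpha * g k')); [intros t; now rewrite Derive_Bj_a |].
  apply is_derive_scal, Derive_correct, Hg.
Qed.

Lemma is_derive_Bj_kp (a p k : R) : ex_derive g k ->
  is_derive (fun k' => Derive (fun p' => Bj alpha beta g a p' k') p) k (beta * Derive g k).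
Proof.
  intros Hg.
  apply (is_derive_ext (fun k' => beta * g k')); [intros t; now rewrite Derive_Bj_p |].
  apply is_derive_scal, Derive_correct, Hg.
Qed.

Lemma is_derive_Bj_ak (a p k : R) : ex_derive g k ->
  is_derive (fun a' => Derive (fun k' => Bj alpha beta g a' p k') k) a (alpha * Derive g k).
Proof.
  intros Hg.
  apply (is_derive_ext (fun a' => (alpha * a' + beta * p) * Derive g k));
    [intros t; now rewrite Derive_Bj_k |].
  auto_derive; [auto | ring].
Qed.

Lemma is_derive_Bj_pk (a p k : R) : ex_derive g k ->
  is_derive (fun p' => Derive (fun k' => Bj alpha beta g a p' k') k) p (beta * Derive g k).
Proof.
  intros Hg.
  apply (is_derive_ext (fun p' => (alpha * a + beta * p') * Derive g k));
    [intros t; now rewrite Derive_Bj_k |].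
  auto_derive; [auto | ring].
Qed.

End Intensity.

Theorem proposition2
  (alpha beta delta pig : R) (g : R -> R)
  (Halpha : 0 < alpha) (Hbeta : 0 < beta) (Hdelta : 0 < delta)
  (Hpig : 0 < pig < 1)
  (Hg0 : g 0 = 1)
  (Hgpos : forall k, 0 <= k -> 0 <= g k)
  (Hgmono : forall k1 k2, 0 <= k1 -> k1 < k2 -> g k1 < g k2)
  (Hgder : forall k, 0 < k -> ex_derive g k)
  (Hgder_pos : forall k, 0 < k -> 0 < Derive g k) :
  let Deltag := / pig - 1 in
  (* (i) purely routine job *)
  (forall (r thetabar k1 k2 : R), 0 <= r -> 0 < thetabar -> 0 <= k1 -> 0 <= k2 ->
     VM alpha beta delta g 0 0 r k1 = VM alpha beta delta g 0 0 r k2 /\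
     Vg pig alpha beta delta g 0 0 r k1 = Vg pig alpha beta delta g 0 0 r k2 /\
     Vg pig alpha beta delta g 0 0 r k1 - VM alpha beta delta g 0 0 r k1
       = Vg pig alpha beta delta g 0 0 r k2 - VM alpha beta delta g 0 0 r k2 /\
     callback thetabar (VM alpha beta delta g 0 0 r k1)
       = callback thetabar (VM alpha beta delta g 0 0 r k2) /\
     callback thetabar (Vg pig alpha beta delta g 0 0 r k1)
       = callback thetabar (Vg pig alpha beta delta g 0 0 r k2) /\
     callback thetabar (VM alpha beta delta g 0 0 r k1)
       - callback thetabar (Vg pig alpha beta delta g 0 0 r k1)
       = callback thetabar (VM alpha beta delta g 0 0 r k2)
       - callback thetabar (Vg pig alpha beta delta g 0 0 r k2)) /\
  (* (ii) job with non-routine content *)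
  (forall (a p r : R), 0 <= a -> 0 <= p -> 0 <= r -> 0 < a + p ->
     (forall k, 0 <= k ->
        Vg pig alpha beta delta g a p r k - VM alpha beta delta g a p r k
        = Deltag * (Bj alpha beta g a p k) ^ 3
                 / (Bj alpha beta g a p k + Pj delta r) ^ 2) /\
     (forall k1 k2, 0 <= k1 -> k1 < k2 ->
        Estar alpha beta delta g a p r k1 < Estar alpha beta delta g a p r k2 /\
        Vg pig alpha beta delta g a p r k1 - VM alpha beta delta g a p r k1
        < Vg pig alpha beta delta g a p r k2 - VM alpha beta delta g a p r k2)) /\
  (* (iii) cross-partials of B_j (both orders of differentiation) *)
  (forall (a p k : R), 0 <= a -> 0 <= p -> 0 < k ->
     is_derive (fun k' => Derive (fun a' => Bj alpha beta g a' p k') a) k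
               (alpha * Derive g k) /\
     is_derive (fun a' => Derive (fun k' => Bj alpha beta g a' p k') k) a
               (alpha * Derive g k) /\
     is_derive (fun k' => Derive (fun p' => Bj alpha beta g a p' k') p) k
               (beta * Derive g k) /\
     is_derive (fun p' => Derive (fun k' => Bj alpha beta g a p' k') k) p
               (beta * Derive g k) /\
     0 < alpha * Derive g k /\ 0 < beta * Derive g k).
Proof.
  intros Deltag; split; [| split].
  - intros r thetabar k1 k2 _ _ _ _.
    rewrite (VM_routine_const _ _ _ _ r k1 k2), (Vg_routine_const _ _ _ _ pig r k1 k2).
    repeat split.
  - intros a p r Ha Hp Hr Hap.
    assert (Hc : 0 < alpha * a + beta * p) by (destruct (Rlt_or_le 0 a); nra).
    assert (HP : 1 <= Pj delta r) by (apply Pj_ge1; lra).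
    assert (HB : forall k, 0 <= k -> 1 <= Bj alpha beta g a p k)
      by (intros k Hk; apply Bj_ge1; [lra | auto]).
    assert (Hgap : forall k, 0 <= k ->
              Vg pig alpha beta delta g a p r k - VM alpha beta delta g a p r k
              = Deltag * Bj alpha beta g a p k ^ 3 / (Bj alpha beta g a p k + Pj delta r) ^ 2)
      by (intros k Hk; apply Vg_sub_VM; specialize (HB k Hk); lra).
    split; [exact Hgap |].
    intros k1 k2 Hk1 Hk12.
    assert (HBlt := Bj_lt alpha beta g a p k1 k2 Hc (Hgmono k1 k2 Hk1 Hk12)).
    assert (HB1 := HB k1 Hk1).
    rewrite (Hgap k1 Hk1), (Hgap k2 ltac:(lra)).
    split; [apply share_lt | apply cube_share_lt; [apply inv_sub1_gt0 |..]]; lra.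
  - intros a p k _ _ Hk.
    specialize (Hgder k Hk); specialize (Hgder_pos k Hk).
    split; [now apply is_derive_Bj_ka |].
    split; [now apply is_derive_Bj_ak |].
    split; [now apply is_derive_Bj_kp |].
    split; [now apply is_derive_Bj_pk |].
    split; nra.
Qed.
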